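(* Let $M$ be a matroid on a finite set $E$ with $r(M)>0$. If $M$ is a unique expansion matroid, then its dual $M^*$ is a unique exchange matroid.
   Context: For a matroid $M=(E,\mathcal{I})$: $\mathcal{I}(M)$ its independent sets, $\mathcal{B}(M)$ its bases, $r(M)$ the size of a base. For $r(M)>0$, $s(M)=\{A\in\mathcal{I}(M): |A|=r(M)-1\}$. $M$ is a unique expansion matroid if for every $B\in\mathcal{B}(M)$ and every $A\in s(M)$, whenever $e_1,e_2\in B$ satisfy $A\cup\{e_1\}\in\mathcal{B}(M)$ and $A\cup\{e_2\}\in\mathcal{B}(M)$, then $e_1=e_2$. The dual $M^*$ is the matroid on $E$ with bases $\{E-B: B\in\mathcal{B}(M)\}$. A matroid $N$ is a unique exchange matroid if for all $B_1,B_2\in\mathcal{B}(N)$, whenever $x\in B_1-B_2$, $y_1,y_2\in B_2-B_1$, $(B_1-\{x\})\cup\{y_1\}\in\mathcal{B}(N)$ and $(B_1-\{x\})\cup\{y_2\}\in\mathcal{B}(N)$, then $y_1=y_2$. *)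

From mathcomp Require Import all_boot.
Set Implicit Arguments. Unset Strict Implicit. Unset Printing Implicit Defensive.

Record matroid (E : finType) := Matroid {
  indep : {set {set E}};
  indep_set0 : set0 \in indep;
  indep_subset : forall A B : {set E}, B \in indep -> A \subset B -> A \in indep;
  indep_aug : forall A B : {set E}, A \in indep -> B \in indep -> #|A| < #|B| ->
      exists2 x, x \in B :\: A & x |: A \in indep
}.

Section MatroidDefs.
Variables (E : finType) (M : matroid E).

Definition bases : {set {set E}} :=
  [set B in indep M | [forall A in indep M, (B \subset A) ==> (A == B)]].

Definition rank_matroid : nat := \max_(A in indep M) #|A|.

Definition s_sets : {set {set E}} :=
  [set A in indep M | #|A| == rank_matroid.-1].

Definition unique_expansion : Prop :=
  forall B A : {set E}, B \in bases -> A \in s_sets ->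
  forall e1 e2 : E, e1 \in B -> e2 \in B ->
    e1 |: A \in bases -> e2 |: A \in bases -> e1 = e2.

Definition dual_bases : {set {set E}} := [set ~: B | B in bases].

End MatroidDefs.

Definition unique_exchange_bases (E : finType) (BB : {set {set E}}) : Prop :=
  forall B1 B2 : {set E}, B1 \in BB -> B2 \in BB ->
  forall x y1 y2 : E, x \in B1 :\: B2 -> y1 \in B2 :\: B1 -> y2 \in B2 :\: B1 ->
    y1 |: (B1 :\ x) \in BB -> y2 |: (B1 :\ x) \in BB -> y1 = y2.

Definition unique_exchange (E : finType) (N : matroid E) : Prop :=
  unique_exchange_bases (bases N).

(* N is the dual matroid of M: its bases are the complements of the bases of M.
   (A matroid is determined by its bases, so this characterizes M^* uniquely.) *)
Definition is_dual (E : finType) (M N : matroid E) : Prop := bases N = dual_bases M.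

From mathcomp Require Import all_boot.

Set Implicit Arguments.
Unset Strict Implicit.
Unset Printing Implicit Defensive.

(* The bases of M^* avoiding a base B1* of M^* are the complements of bases of M
   inside B1* + x.  Two exchanges y1 |: (B1* :\ x), y2 |: (B1* :\ x) therefore
   give two bases (x |: ~: B1* ) :\ y_i of M, which are both expansions of the
   common independent set obtained by removing y1 and y2; since y1 and y2 lie in
   the base ~: B1* of M, unique expansion forces y1 = y2. *)

Section MatroidBases.
Variables (E : finType) (M : matroid E).

Lemma bases_indep B : B \in bases M -> B \in indep M.
Proof. by rewrite inE => /andP[]. Qed.

Lemma card_bases B : B \in bases M -> #|B| = rank_matroid M.
Proof.
move=> baseB; have indepB := bases_indep baseB.
have [A indepA cardA] : exists2 A, A \in indep M & #|A| = rank_matroid M.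
  rewrite /rank_matroid; have [|A indepA ->] := @eq_bigmax_cond _ (mem (indep M)) (fun A => #|A|).
    by apply/card_gt0P; exists B.
  by exists A.
apply/eqP; rewrite eqn_leq (leq_bigmax_cond _ indepB) /= leqNgt -cardA.
apply/negP => /(indep_aug indepB indepA) [x /setDP[_ xNB] indep_xB].
move: baseB; rewrite inE => /andP[_ /forall_inP/(_ _ indep_xB)].
rewrite subsetUr => /eqP xB_eq_B.
by move: xNB; rewrite -xB_eq_B setU11.
Qed.

Lemma bases_setD1_s_sets B e : B \in bases M -> e \in B -> B :\ e \in s_sets M.
Proof.
move=> baseB eB; rewrite inE (indep_subset (bases_indep baseB)) ?subD1set //=.
by rewrite -(card_bases baseB) (cardsD1 e B) eB.
Qed.

Lemma mem_dual_bases X : (X \in dual_bases M) = (~: X \in bases M).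
Proof.
apply/imsetP/idP => [[B baseB ->]|baseCX]; first by rewrite setCK.
by exists (~: X); rewrite ?setCK.
Qed.

Lemma unique_expansion_setD1 (B S : {set E}) y1 y2 : unique_expansion M ->
  B \in bases M -> y1 \in B -> y2 \in B -> y1 \in S -> y2 \in S ->
  S :\ y1 \in bases M -> S :\ y2 \in bases M -> y1 = y2.
Proof.
move=> uniqM baseB y1B y2B y1S y2S baseS1 baseS2.
apply/eqP/negPn/negP => y1Ny2.
have y1S2 : y1 \in S :\ y2 by rewrite !inE y1Ny2.
have y2S1 : y2 \in S :\ y1 by rewrite !inE eq_sym y1Ny2.
have S12_eq : S :\ y1 :\ y2 = S :\ y2 :\ y1 by rewrite !setDDl setUC.
apply: (negP y1Ny2); apply/eqP.
apply: (uniqM B (S :\ y2 :\ y1)); rewrite ?setD1K //.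
- exact: bases_setD1_s_sets.
- by rewrite -S12_eq setD1K.
Qed.

End MatroidBases.

Lemma setC_exchange (E : finType) (B : {set E}) x y : x != y ->
  ~: (y |: (B :\ x)) = (x |: ~: B) :\ y.
Proof.
move=> xNy; apply/setP => z; rewrite !inE.
by case: (eqVneq z y) => //= _; case: (z == x); case: (z \in B).
Qed.

(* [0 < rank_matroid M] is unused: it only makes s(M) meaningful in the paper. *)
Theorem theorem11 (E : finType) (M Mstar : matroid E) :
  is_dual M Mstar -> 0 < rank_matroid M -> unique_expansion M ->
  unique_exchange Mstar.
Proof.
move=> dualM _ uniqM B1 B2 + + x y1 y2 + + + +.
rewrite /is_dual in dualM; rewrite dualM !mem_dual_bases => baseB1 _.
move=> /setDP[xB1 _] /setDP[_ y1NB1] /setDP[_ y2NB1].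
have xNy1 : x != y1 by apply: contraNneq y1NB1 => <-.
have xNy2 : x != y2 by apply: contraNneq y2NB1 => <-.
rewrite !setC_exchange // => baseS1 baseS2.
by apply: (unique_expansion_setD1 uniqM baseB1 _ _ _ _ baseS1 baseS2);
  rewrite !inE ?y1NB1 ?y2NB1 ?orbT.
Qed.
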